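(* Let $X_1,X_2,\dots$ be i.i.d. $\mathcal{N}(\mu_1,1)$ with $\mu_1\neq0$, let $f_0$ and $f_1$ be the densities of $\mathcal{N}(0,1)$ and $\mathcal{N}(\mu_1,1)$, and for $t\ge0$ let $$\hat\nu_t^{\mathrm{CUSUM}}=\arg\max_{0\le k\le t}\sum_{i=k+1}^t\log\frac{f_1(X_i)}{f_0(X_i)}.$$ Then $$\mathbb{E}\Big[\sup_{t\ge0}\hat\nu_t^{\mathrm{CUSUM}}\Big]\le\sum_{n=1}^\infty n\exp\left(-\frac{n\mu_1^2}{8}\right).$$
   Context: This is the single-stream setting with change-point at time $0$: every observation is drawn from the post-change distribution $\mathcal{N}(\mu_1,1)$. An empty sum equals $0$. *)

From HB Require Import structures.
From mathcomp Require Import all_boot all_order all_algebra.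
From mathcomp Require Import all_classical all_reals all_analysis.
Set Implicit Arguments. Unset Strict Implicit. Unset Printing Implicit Defensive.
Import Order.TTheory GRing.Theory Num.Theory.
Local Open Scope classical_set_scope.
Local Open Scope ring_scope.

Section defs.
Context {R : realType} {d : measure_display} {T : measurableType d}.

Definition mutually_independent (P : probability T R) (X : nat -> T -> R) :=
  forall (s : seq nat) (B : nat -> set R), uniq s ->
    (forall i, measurable (B i)) ->
    P (\big[setI/setT]_(i <- s) (X i @^-1` B i)) =
    (\prod_(i <- s) P (X i @^-1` B i))%E.

Definition has_normal_law (P : probability T R) (m : R) (Y : T -> R) :=
  forall A : set R, measurable A -> P (Y @^-1` A) = normal_prob m 1 A.

Definition llr (mu1 x : R) : R := ln (normal_pdf mu1 1 x / normal_pdf 0 1 x).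

(* Observations X_1, X_2, ... are represented by X 0, X 1, ...;
   so sum_{i=k+1}^t g(X_i) is \sum_(k <= i < t) g (X i). *)
Definition cusum_stat (mu1 : R) (X : nat -> T -> R) (k t : nat) (w : T) : R :=
  \sum_(k <= i < t) llr mu1 (X i w).

(* CUSUM change-point estimate: argmax over 0 <= k <= t; ties broken by taking
   the largest maximizer (ties have probability zero). *)
Definition nu_cusum (mu1 : R) (X : nat -> T -> R) (t : nat) (w : T) : nat :=
  (\max_(k < t.+1 | [forall j : 'I_t.+1,
        (cusum_stat mu1 X j t w <= cusum_stat mu1 X k t w)%R]) (k : nat))%N.

End defs.

From HB Require Import structures.
From mathcomp Require Import all_boot all_order all_algebra.
From mathcomp Require Import all_classical all_reals all_analysis.
From mathcomp Require Import finmap ring measurable_realfun.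
Import Order.TTheory GRing.Theory Num.Theory numFieldNormedType.Exports.
Import HBNNSimple.

Set Implicit Arguments.
Unset Strict Implicit.
Unset Printing Implicit Defensive.
Local Open Scope classical_set_scope.
Local Open Scope ring_scope.

(* Write [S_n] for the sum of [llr mu1 (X i)] over [i < n].  If [k] is the CUSUM
   estimate at some time [t], comparing [k] with the candidate [0] gives
   [S_k <= 0], hence [k <= k exp (- S_k / 2) <= \sum_n n exp (- S_n / 2)], a bound
   that does not depend on [t].  Under [N(mu1, 1)], completing the square shows
   that [exp (- llr mu1 (X i) / 2)] has mean [exp (- mu1 ^ 2 / 8)]; by
   independence [E exp (- S_n / 2) = exp (- n mu1 ^ 2 / 8)], and monotone
   convergence sums the bound.  As independence is only assumed for events, the
   product rule for expectations is first proved for nonnegative simple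
   functions of the [X i] and then extended by monotone approximation;
   expectations of functions of [X i] are computed through the normal density. *)

Lemma uniq_cat_cons (T : eqType) (t s : seq T) (a : T) :
  uniq (t ++ a :: s) = uniq ((a :: t) ++ s).
Proof. by apply: perm_uniq; rewrite -cat1s perm_catCA. Qed.

Lemma big_eta_notin (V W : Type) (idx : W) (op : Monoid.law idx)
    (t : seq nat) (a : nat) (B : nat -> V) (A : V) (F : nat -> V -> W) :
  a \notin t ->
  \big[op/idx]_(i <- t) F i ([eta B with a |-> A] i) =
  \big[op/idx]_(i <- t) F i (B i).
Proof.
move=> aNt; apply: eq_big_seq => i it /=.
by case: eqP => // ia; move: aNt; rewrite -ia it.
Qed.

Lemma prode_le_expr (R : realDomainType) (I : Type) (s : seq I)
    (F : I -> \bar R) (b : R) :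
  (forall i, (0 <= F i)%E) -> (forall i, (F i <= b%:E)%E) ->
  (\prod_(i <- s) F i <= (b ^+ size s)%:E)%E.
Proof.
move=> F_ge0 Fb; elim: s => [|i s IH]; first by rewrite big_nil.
by rewrite big_cons exprS EFinM lee_pmul // prode_ge0.
Qed.

Lemma cvg_bigprod (R : realType) (I : Type) (s : seq I) (u : nat -> I -> R)
    (l : I -> R) :
  (forall i, u n i @[n --> \oo] --> l i) ->
  \prod_(i <- s) u n i @[n --> \oo] --> \prod_(i <- s) l i.
Proof.
move=> u_cvg; elim: s => [|i s IH].
  by under eq_fun do rewrite big_nil; rewrite big_nil; exact: cvg_cst.
by under eq_fun do rewrite big_cons; rewrite big_cons; exact: cvgM.
Qed.

Lemma natr_le_weighted_nneseries (R : realType) (u : nat -> R) (k : nat) :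
  (forall n, 0 <= u n) -> 1 <= u k ->
  ((k%:R)%:E <= \sum_(0 <= n <oo) (n%:R * u n)%:E)%E.
Proof.
move=> u_ge0 uk; apply: le_trans (nneseries_lim_ge k.+1 _); last first.
  by move=> n _ _; rewrite lee_fin mulr_ge0.
rewrite big_nat_recr //= lee_paddl ?lee_fin ?ler_peMr //.
by apply: sume_ge0 => n _; rewrite lee_fin mulr_ge0.
Qed.

(* No measurability needed: both integrals are suprema over simple minorants. *)
Lemma ge0_le_integral_nonmeas d (T : measurableType d) (R : realType)
    (mu : {measure set T -> \bar R}) (f g : T -> \bar R) :
  (forall x, 0 <= f x)%E -> (forall x, f x <= g x)%E ->
  (\int[mu]_x f x <= \int[mu]_x g x)%E.
Proof.
move=> f_ge0 fg; have g_ge0 x : (0 <= g x)%E := le_trans (f_ge0 x) (fg x).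
rewrite !ge0_integralTE //; apply: le_ereal_sup => _ /= [h hf <-].
by exists h => //= x; exact: le_trans (hf x) (fg x).
Qed.

Section integral_density.
Local Open Scope ereal_scope.
Context d d' (T : measurableType d) (T' : measurableType d') (R : realType).
Variables (P : {measure set T -> \bar R}) (Y : T -> T').
Variables (mu : {measure set T' -> \bar R}) (p : T' -> R).
Hypotheses (mY : measurable_fun setT Y) (mp : measurable_fun setT p).
Hypothesis p_ge0 : forall x, (0 <= p x)%R.
Hypothesis lawY :
  forall A, measurable A -> P (Y @^-1` A) = \int[mu]_(x in A) (p x)%:E.

Let integral_indic_density (A : set T') : measurable A ->
  \int[P]_w (\1_A (Y w))%:E = \int[mu]_x ((\1_A x)%:E * (p x)%:E).
Proof.
move=> mA.
rewrite (_ : (fun w => _) = fun w => (\1_(Y @^-1` A) w)%:E); last first.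
  by apply/funext => w; rewrite !indicE.
rewrite integral_indic ?setIT ?lawY //; last first.
  by rewrite -[_ @^-1` _]setTI; exact: mY.
rewrite integral_mkcond; apply: eq_integral => x _.
by rewrite patchE indicE; case: (x \in A); rewrite ?mul1e ?mul0e.
Qed.

Let integral_density_nnsfun (h : {nnsfun T' >-> R}) :
  \int[P]_w (h (Y w))%:E = \int[mu]_x ((h x)%:E * (p x)%:E).
Proof.
under eq_integral do rewrite fimfunE -fsumEFin //.
under [RHS]eq_integral => x _.
  rewrite fimfunE -fsumEFin // ge0_mule_fsuml; last first.
    by move=> y; exact: nnfun_muleindic_ge0.
  over.
rewrite !ge0_integral_fsum //; first last.
- by move=> y w _; rewrite EFinM nnfun_muleindic_ge0.
- move=> y; apply/measurable_EFinP; apply: measurable_funM => //.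
  exact: measurableT_comp mY.
- move=> y x _; apply: mule_ge0; last by rewrite lee_fin.
  by rewrite EFinM nnfun_muleindic_ge0.
- move=> y; apply/measurable_EFinP; apply: measurable_funM => //.
  exact: measurable_funM.
apply: eq_fsbigr => y /set_mem [x _ <-].
under eq_integral do rewrite EFinM.
under [RHS]eq_integral do rewrite EFinM -muleA.
rewrite !ge0_integralZl_EFin //.
- by rewrite integral_indic_density //; exact: measurable_sfunP.
- by move=> z _; rewrite mule_ge0 ?lee_fin.
- by apply: emeasurable_funM => //; exact/measurable_EFinP.
- by apply/measurable_EFinP; exact: measurableT_comp mY.
Qed.

Lemma ge0_integral_density (f : T' -> \bar R) :
  measurable_fun setT f -> (forall x, 0 <= f x) ->
  \int[P]_w f (Y w) = \int[mu]_x (f x * (p x)%:E).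
Proof.
move=> mf f_ge0; pose h := nnsfun_approx measurableT mf.
have h_cvg x : (h n x)%:E @[n --> \oo] --> f x.
  exact: (cvg_nnsfun_approx _ _ (fun x _ => f_ge0 x)).
have h_nd x : {homo (fun n => h n x) : m n / (m <= n)%N >-> (m <= n)%R}.
  by move=> m n mn; exact/lefP/nd_nnsfun_approx.
transitivity (limn (fun n => \int[P]_w (h n (Y w))%:E)).
  rewrite -monotone_convergence //.
  - by apply: eq_integral => w _; apply/esym/cvg_lim => //; exact: h_cvg.
  - by move=> n; apply/measurable_EFinP; exact: measurableT_comp mY.
  - by move=> n w _; rewrite lee_fin.
  - by move=> w _ m n mn; rewrite lee_fin h_nd.
under eq_fun do rewrite integral_density_nnsfun.
rewrite -monotone_convergence //.
- apply: eq_integral => x _; apply/cvg_lim => //.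
  by apply: cvgeZr => //; exact: h_cvg.
- by move=> n; apply: emeasurable_funM => //; exact/measurable_EFinP.
- by move=> n x _; rewrite mule_ge0 ?lee_fin.
- by move=> x _ m n mn; rewrite lee_wpmul2r ?lee_fin ?h_nd.
Qed.

End integral_density.

Lemma ge0_integral_normal_law d (T : measurableType d) (R : realType)
    (P : probability T R) (m : R) (Y : T -> R) (f : R -> \bar R) :
  measurable_fun setT Y -> has_normal_law P m Y ->
  measurable_fun setT f -> (forall x, (0 <= f x)%E) ->
  (\int[P]_w f (Y w) = \int[lebesgue_measure]_x (f x * (normal_pdf m 1 x)%:E))%E.
Proof.
(* [lebesgue_measure] lives on [measurableTypeR R], a copy of [R] with the same
   measurable sets. *)
move=> mY lawY mf f_ge0.
apply: (@ge0_integral_density _ _ _ (measurableTypeR R)) => //.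
- exact: measurable_normal_pdf.
- exact: normal_pdf_ge0.
Qed.

Section independent_product.
Context d (T : measurableType d) (R : realType).
Variables (P : probability T R) (X : nat -> T -> R).
Hypotheses (mX : forall i, measurable_fun setT (X i))
  (indep : mutually_independent P X).

Let mpreimage i A : measurable A -> measurable (X i @^-1` A).
Proof. by move=> mA; rewrite -[X i @^-1` A]setTI; exact: mX. Qed.

Let pr A := fine (P A).

Let prE A : measurable A -> P A = (pr A)%:E.
Proof. by move=> mA; rewrite fineK // fin_num_measure. Qed.

Section indicator_combination.
Variables (h : R -> R) (r : nat) (c : nat -> R) (D : nat -> set R).
Hypotheses (c_ge0 : forall j, 0 <= c j) (mD : forall j, measurable (D j)).
Hypothesis hE : forall x, h x = \sum_(j < r) c j * \1_(D j) x.

Let h_ge0 x : 0 <= h x.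
Proof. by rewrite hE; apply: sumr_ge0 => j _; apply: mulr_ge0. Qed.

Let mh : measurable_fun setT h.
Proof.
rewrite (_ : h = fun x => \sum_(j < r) c j * \1_(D j) x); last exact/funext.
by apply: measurable_sum => j; apply: measurable_funM.
Qed.

Let mean_h i := \sum_(j < r) c j * pr (X i @^-1` D j).

Let indic_prod_cons (a : nat) (s t : seq nat) (B : nat -> set R) (w : T) :
  a \notin t ->
  \1_(\big[setI/setT]_(i <- t) X i @^-1` B i) w * \prod_(i <- a :: s) h (X i w) =
  \sum_(j < r) c j * (\1_(\big[setI/setT]_(i <- a :: t)
      X i @^-1` [eta B with a |-> D j] i) w * \prod_(i <- s) h (X i w)).
Proof.
move=> aNt; rewrite big_cons hE mulr_suml mulr_sumr; apply: eq_bigr => j _.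
rewrite big_cons /= eqxx (big_eta_notin _ _ _ (fun i A => X i @^-1` A) aNt).
rewrite indicI /=.
have -> : \1_(X a @^-1` D j) w = \1_(D j) (X a w) :> R by rewrite !indicE.
ring.
Qed.

(* Generalized over a prefix [t] of events so that the induction on [s] can
   move one factor [h (X a)] at a time into the events, where independence
   applies. *)
Let integral_indic_prod (s t : seq nat) (B : nat -> set R) :
  uniq (t ++ s) -> (forall i, measurable (B i)) ->
  (\int[P]_w ((\1_(\big[setI/setT]_(i <- t) X i @^-1` B i) w
               * \prod_(i <- s) h (X i w))%:E)
  = ((\prod_(i <- t) pr (X i @^-1` B i)) * \prod_(i <- s) mean_h i)%:E)%E.
Proof.
elim: s t B => [|a s IH] t B.
  rewrite cats0 => ut mB; rewrite big_nil mulr1.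
  under eq_integral do rewrite big_nil mulr1.
  rewrite integral_indic // ?setIT; last first.
    by apply: bigsetI_measurable => i _; exact: mpreimage.
  rewrite -prodEFin; apply: eq_trans (indep ut mB) _.
  by apply: eq_bigr => i _; exact/prE/mpreimage.
rewrite uniq_cat_cons => uats mB.
have aNt : a \notin t.
  by move: uats; rewrite cat_cons /= mem_cat negb_or => /andP[/andP[]].
pose B' j := [eta B with a |-> D j].
have mB' j i : measurable (B' j i) by rewrite /=; case: ifP.
pose G j w := (\1_(\big[setI/setT]_(i <- a :: t) X i @^-1` B' j i) w
  * \prod_(i <- s) h (X i w))%:E.
have G_ge0 j w : (0 <= G j w)%E by rewrite lee_fin mulr_ge0 // prodr_ge0.
have mG j : measurable_fun setT (G j).
  apply/measurable_EFinP; apply: measurable_funM => //.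
    apply: measurable_indic; apply: bigsetI_measurable => i _; exact: mpreimage.
  by apply: measurable_prod => i _; exact: measurableT_comp mh (mX i).
transitivity (\int[P]_w \sum_(j < r) ((c j)%:E * G j w))%E.
  by apply: eq_integral => w _; rewrite sumEFin indic_prod_cons.
rewrite ge0_integral_sum //; last 2 first.
- by move=> j; apply: emeasurable_funM => //; exact: mG.
- by move=> j w _; apply: mule_ge0; [rewrite lee_fin | exact: G_ge0].
transitivity (\sum_(j < r) (c j * ((\prod_(i <- a :: t) pr (X i @^-1` B' j i))
    * \prod_(i <- s) mean_h i))%:E)%E.
  apply: eq_bigr => j _.
  rewrite (ge0_integralZl_EFin _ _ (fun w _ => G_ge0 j w) (mG j)) //.
  by rewrite IH // -EFinM.
rewrite sumEFin; congr EFin.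
rewrite [in RHS]big_cons /mean_h mulr_suml mulr_sumr; apply: eq_bigr => j _.
rewrite big_cons /= eqxx.
by rewrite (big_eta_notin _ _ _ (fun i A => pr (X i @^-1` A)) aNt); ring.
Qed.

Lemma integral_prod_comb (s : seq nat) : uniq s ->
  (\int[P]_w (\prod_(i <- s) h (X i w))%:E
   = \prod_(i <- s) \int[P]_w (h (X i w))%:E)%E.
Proof.
have integral_prefix0 (s' : seq nat) : uniq s' ->
    (\int[P]_w (\prod_(i <- s') h (X i w))%:E
     = (\prod_(i <- s') mean_h i)%:E)%E.
  move=> us'; have := integral_indic_prod (t := [::]) us' (fun _ => measurableT).
  rewrite !big_nil mul1r => <-; apply: eq_integral => w _.
  by rewrite indicT mul1r.
move=> us; rewrite integral_prefix0 // -prodEFin; apply: eq_bigr => i _.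
have := integral_prefix0 [:: i] isT; rewrite big_seq1 => <-.
by apply: eq_integral => w _; rewrite big_seq1.
Qed.

End indicator_combination.

Lemma integral_prod_nnsfun (h : {nnsfun R >-> R}) (s : seq nat) : uniq s ->
  (\int[P]_w (\prod_(i <- s) h (X i w))%:E
   = \prod_(i <- s) \int[P]_w (h (X i w))%:E)%E.
Proof.
have hE := fimfunEord h; rewrite /= in hE; set S := enum_fset _ in hE.
apply: (@integral_prod_comb _ _ _ (fun j => h @^-1` [set S`_j]) _ _ hE).
- move=> j; have [jS|/(nth_default 0)->//] := ltnP j (size S).
  have : S`_j \in fset_set (range h) := mem_nth 0 jS.
  rewrite in_fset_set // => /set_mem; case=> x _ <-; exact: fun_ge0.
- by move=> j; exact: measurable_sfunP.
Qed.

Lemma integral_prod_le (g : R -> R) (b : R) (s : seq nat) :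
  measurable_fun setT g -> (forall x, 0 <= g x) ->
  (forall i, \int[P]_w (g (X i w))%:E <= b%:E)%E -> uniq s ->
  (\int[P]_w (\prod_(i <- s) g (X i w))%:E <= (b ^+ size s)%:E)%E.
Proof.
move=> mg g_ge0 gb us.
have mEg : measurable_fun setT (EFin \o g) by exact/measurable_EFinP.
pose h := nnsfun_approx measurableT mEg.
have Eg_ge0 x : setT x -> (0 <= (EFin \o g) x)%E by rewrite lee_fin.
have h_cvg x : h n x @[n --> \oo] --> g x.
  have := cvg_nnsfun_approx measurableT mEg Eg_ge0 (Logic.I : setT x).
  by case/fine_cvgP.
have h_nd x : {homo (fun n => h n x) : m n / (m <= n)%N >-> (m <= n)%R}.
  by move=> m n mn; exact/lefP/nd_nnsfun_approx.
have h_le n x : h n x <= g x.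
  rewrite -(cvg_lim _ (h_cvg x)) //.
  exact: nondecreasing_cvgn_le (h_nd x) (cvgP _ (h_cvg x)) n.
pose H n w := (\prod_(i <- s) h n (X i w))%:E.
have mhX n i : measurable_fun setT (fun w => h n (X i w)).
  exact: measurableT_comp (measurable_funPT (h n)) (mX i).
have mH n : measurable_fun setT (H n).
  by apply/measurable_EFinP; apply: measurable_prod => i _; exact: mhX.
have H_ge0 n w : (0 <= H n w)%E by rewrite lee_fin prodr_ge0.
have H_nd w : {homo H^~ w : m n / (m <= n)%N >-> (m <= n)%E}.
  by move=> m n mn; rewrite lee_fin; apply: ler_prod => i _; rewrite fun_ge0 h_nd.
have H_cvg w : H^~ w @ \oo --> (\prod_(i <- s) g (X i w))%:E.
  by apply: cvg_EFin; [exact: nearW | exact: cvg_bigprod].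
have H_le n : (\int[P]_w H n w <= (b ^+ size s)%:E)%E.
  rewrite integral_prod_nnsfun //; apply: prode_le_expr => i.
    by apply: integral_ge0 => w _; rewrite lee_fin.
  apply: le_trans (gb i); apply: ge0_le_integral => //.
  - by move=> w _; rewrite lee_fin.
  - by apply/measurable_EFinP; exact: mhX.
  - by apply/measurable_EFinP; exact: measurableT_comp mg (mX i).
  - by move=> w _; rewrite lee_fin h_le.
have -> : (\int[P]_w (\prod_(i <- s) g (X i w))%:E = \int[P]_w limn (H^~ w))%E.
  by apply: eq_integral => w _; apply/esym/cvg_lim => //; exact: H_cvg.
rewrite monotone_convergence //.
apply: lime_le; last exact: nearW H_le.
apply: ereal_nondecreasing_is_cvgn => m n mn.
by apply: ge0_le_integral => // w _; exact: H_nd.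
Qed.

End independent_product.

Section log_likelihood_ratio.
Variables (R : realType) (mu : R).

Lemma llrE x : llr mu x = mu * x - mu ^+ 2 / 2.
Proof.
rewrite /llr !normal_pdfE ?oner_neq0 // /normal_fun expr1n.
set e0 := expR (- (x - 0) ^+ 2 / (1 *+ 2)).
have -> : expR (- (x - mu) ^+ 2 / (1 *+ 2)) = expR (mu * x - mu ^+ 2 / 2) * e0.
  by rewrite /e0 -expRD; congr expR; rewrite -[_ *+ 2]/(1 + 1 : R); field.
rewrite mulrCA mulfK ?expRK //.
by rewrite mulf_neq0 // gt_eqF // ?expR_gt0 // normal_peak_gt0 // oner_neq0.
Qed.

Lemma measurable_expR_llr : measurable_fun setT (fun x => expR (- llr mu x / 2)).
Proof.
rewrite (_ : llr mu = fun x => mu * x - mu ^+ 2 / 2); last exact/funext/llrE.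
apply: measurableT_comp => //; apply: measurable_funM => //.
by apply/measurable_funN/measurable_funB => //; exact: measurable_funM.
Qed.

Lemma expR_llr_normal_pdf x :
  expR (- llr mu x / 2) * normal_pdf mu 1 x =
  expR (- mu ^+ 2 / 8) * normal_pdf (mu / 2) 1 x.
Proof.
rewrite llrE !normal_pdfE ?oner_neq0 // /normal_fun expr1n.
rewrite mulrCA -expRD [RHS]mulrCA -expRD; congr (_ * expR _).
by rewrite -[_ *+ 2]/(1 + 1 : R); field.
Qed.

Lemma integral_expR_llr_normal_pdf :
  (\int[lebesgue_measure]_x ((expR (- llr mu x / 2))%:E * (normal_pdf mu 1 x)%:E)
   = (expR (- mu ^+ 2 / 8))%:E)%E.
Proof.
under eq_integral do rewrite -EFinM expR_llr_normal_pdf EFinM.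
rewrite ge0_integralZl_EFin ?integral_normal_pdf ?mule1 //.
- by move=> x _; rewrite lee_fin normal_pdf_ge0.
- by apply/measurable_EFinP; exact: measurable_normal_pdf.
Qed.

Lemma integral_expR_llr_normal_law d (T : measurableType d)
    (P : probability T R) (Y : T -> R) :
  measurable_fun setT Y -> has_normal_law P mu Y ->
  (\int[P]_w (expR (- llr mu (Y w) / 2))%:E = (expR (- mu ^+ 2 / 8))%:E)%E.
Proof.
move=> mY lawY.
pose f x := (expR (- llr mu x / 2))%:E.
rewrite (ge0_integral_normal_law (f := f) mY lawY).
- exact: integral_expR_llr_normal_pdf.
- by apply/measurable_EFinP; exact: measurable_expR_llr.
- by move=> x; rewrite lee_fin expR_ge0.
Qed.

End log_likelihood_ratio.

Lemma cusum_prefix_le0 d (T : measurableType d) (R : realType) (mu : R)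
    (X : nat -> T -> R) (t : nat) (w : T) :
  \sum_(0 <= i < nu_cusum mu X t w) llr mu (X i w) <= 0.
Proof.
rewrite /nu_cusum; set argmax := (fun k : 'I_t.+1 => [forall j : 'I_t.+1,
  cusum_stat mu X j t w <= cusum_stat mu X k t w]).
have [k0 k0max|noargmax] := pickP argmax; last first.
  by rewrite [\max_(_ < _ | _) _]big_pred0 // big_geq.
rewrite (bigop.bigmax_eq_arg k0) //.
case: (arg_maxnP (fun k : 'I_t.+1 => (k : nat)) k0max) => k /forallP/(_ ord0) + _.
have kt : (k <= t)%N by rewrite -ltnS ltn_ord.
rewrite /cusum_stat (big_cat_nat (leq0n k) kt) /=.
by rewrite -[X in _ <= X]add0r lerD2r.
Qed.

Definition sqrt_likelihood_ratio d (T : measurableType d) (R : realType) (mu : R)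
    (X : nat -> T -> R) (n : nat) (w : T) : R :=
  \prod_(0 <= i < n) expR (- llr mu (X i w) / 2).

Section cusum_series_bound.
Context d (T : measurableType d) (R : realType).
Variables (P : probability T R) (mu : R) (X : nat -> T -> R).

Lemma sqrt_likelihood_ratio_ge0 n w : 0 <= sqrt_likelihood_ratio mu X n w.
Proof. by rewrite prodr_ge0 // => i _; exact: expR_ge0. Qed.

Lemma nu_cusum_le_series t w :
  (((nu_cusum mu X t w)%:R)%:E
   <= \sum_(0 <= n <oo) (n%:R * sqrt_likelihood_ratio mu X n w)%:E)%E.
Proof.
apply: natr_le_weighted_nneseries => [n|]; first exact: sqrt_likelihood_ratio_ge0.
rewrite /sqrt_likelihood_ratio -expR_sum -[X in X <= _]expR0 ler_expR.
rewrite -mulr_suml sumrN mulNr oppr_ge0 pmulr_lle0 ?invr_gt0 //.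
exact: cusum_prefix_le0.
Qed.

Hypotheses (mX : forall i, measurable_fun setT (X i))
  (indep : mutually_independent P X) (law : forall i, has_normal_law P mu (X i)).

Lemma measurable_sqrt_likelihood_ratio n :
  measurable_fun setT (sqrt_likelihood_ratio mu X n).
Proof.
apply: measurable_prod => i _.
exact: measurableT_comp (measurable_expR_llr mu) (mX i).
Qed.

Lemma integral_sqrt_likelihood_ratio_le n :
  (\int[P]_w (sqrt_likelihood_ratio mu X n w)%:E
   <= (expR (- mu ^+ 2 / 8) ^+ n)%:E)%E.
Proof.
have := integral_prod_le mX indep (b := expR (- mu ^+ 2 / 8))
  (s := index_iota 0 n) (measurable_expR_llr mu).
rewrite size_iota subn0; apply => //; last exact: iota_uniq.
by move=> i; rewrite integral_expR_llr_normal_law.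
Qed.

Lemma integral_weighted_series_le :
  (\int[P]_w \sum_(0 <= n <oo) (n%:R * sqrt_likelihood_ratio mu X n w)%:E
   <= \sum_(0 <= n <oo) (n%:R * expR (- mu ^+ 2 / 8) ^+ n)%:E)%E.
Proof.
have mQ n := measurable_sqrt_likelihood_ratio n.
have Q_ge0 n w := sqrt_likelihood_ratio_ge0 n w.
rewrite integral_nneseries //; last 2 first.
- by move=> n; apply/measurable_EFinP; exact: measurable_funM.
- by move=> n w _; rewrite lee_fin mulr_ge0.
apply: lee_nneseries => [n _ _|n _].
  by apply: integral_ge0 => w _; rewrite lee_fin mulr_ge0.
under eq_integral do rewrite EFinM.
rewrite ge0_integralZl_EFin //; last 2 first.
- by move=> w _; rewrite lee_fin.
- exact/measurable_EFinP.
by rewrite EFinM lee_wpmul2l ?lee_fin // integral_sqrt_likelihood_ratio_le.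
Qed.

End cusum_series_bound.

Theorem lemma5 (R : realType) (d : measure_display) (T : measurableType d)
  (P : probability T R) (mu1 : R) (X : nat -> {RV P >-> R}) :
  mu1 != 0 ->
  mutually_independent P (fun i => (X i : T -> R)) ->
  (forall i, has_normal_law P mu1 (X i)) ->
  (\int[P]_w ereal_sup [set ((nu_cusum mu1 (fun i => (X i : T -> R)) t w)%:R)%:E
                          | t in [set: nat]]
   <= \sum_(1 <= n <oo) ((n%:R * expR (- (n%:R * mu1 ^+ 2) / 8))%:E))%E.
Proof.
move=> _ indep law; set Y := (fun i => (X i : T -> R)) in indep *.
have mY i : measurable_fun setT (Y i) by exact: measurable_funPT.
apply: (@le_trans _ _
    (\int[P]_w \sum_(0 <= n <oo) (n%:R * sqrt_likelihood_ratio mu1 Y n w)%:E)%E).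
  apply: ge0_le_integral_nonmeas => w; last first.
    by apply: ge_ereal_sup => _ [t _ <-]; exact: nu_cusum_le_series.
  apply: (@le_trans _ _ ((nu_cusum mu1 Y 0 w)%:R)%:E); first by rewrite lee_fin.
  by apply: ereal_sup_ubound; exists 0%N.
apply: le_trans (integral_weighted_series_le mY indep law) _.
rewrite nneseries_recl // mul0r add0e le_eqVlt; apply/orP; left; apply/eqP.
apply: eq_eseriesr => n _.
by rewrite -expRM_natl; congr (_ * expR _)%:E; ring.
Qed.
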